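(* Let $d$ be the Euclidean metric on $\mathbb{R}^n$, let $M\subset\mathbb{R}^n$, and let $(M,d,X,C)$ be a metric coordinate system with $X$ an open subset of $\mathbb{R}^n$. Then the identity map $(X,d)\to(X,d_C)$ is a homeomorphism.
   Context: A metric coordinate system is a quadruple $(M,d,X,C)$ where $(M,d)$ is a metric space, $X\subset M$, and $C\subset M$ is such that for all $x,y\in X$ with $x\neq y$ there is $c\in C$ with $d(x,c)\neq d(y,c)$. For $x\in X$, $c\in C$, $x_c:=d(x,c)$, and $d_C(x,y):=\sup_{c\in C}|x_c-y_c|$ is a metric on $X$. *)

From HB Require Import structures.
From mathcomp Require Import all_boot all_order all_algebra.
From mathcomp Require Import classical_sets reals.
Set Implicit Arguments. Unset Strict Implicit. Unset Printing Implicit Defensive.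
Import Order.TTheory GRing.Theory Num.Theory.
Local Open Scope ring_scope.
Local Open Scope classical_set_scope.

Definition euclid_dist {R : realType} {n : nat} (x y : 'rV[R]_n) : R :=
  Num.sqrt (\sum_(i < n) (x ord0 i - y ord0 i) ^+ 2).

Definition euclid_open {R : realType} {n : nat} (X : set 'rV[R]_n) : Prop :=
  forall x, X x -> exists2 e : R, 0 < e & forall y, euclid_dist x y < e -> X y.

(* (M,d,X,C) is a metric coordinate system (d assumed to be a metric on M) *)
Definition metric_coord_system {R : realType} {T : Type} (d : T -> T -> R)
    (M X C : set T) : Prop :=
  [/\ X `<=` M, C `<=` M &
      forall x y, X x -> X y -> x <> y -> exists2 c, C c & d x c <> d y c].

Definition dC {R : realType} {T : Type} (d : T -> T -> R) (C : set T) (x y : T) : R :=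
  sup [set `|d x c - d y c| | c in C].

Definition id_continuous_on {R : realType} {T : Type} (X : set T)
    (d1 d2 : T -> T -> R) : Prop :=
  forall x, X x -> forall e : R, 0 < e ->
    exists2 del : R, 0 < del & forall y, X y -> d1 x y < del -> d2 x y < e.

(* the identity map (X,d1) -> (X,d2) is a homeomorphism: it is a bijection,
   so this means continuity in both directions *)
Definition id_homeomorphism {R : realType} {T : Type} (X : set T)
    (d1 d2 : T -> T -> R) : Prop :=
  id_continuous_on X d1 d2 /\ id_continuous_on X d2 d1.

From HB Require Import structures.
From mathcomp Require Import all_boot all_order all_algebra.
From mathcomp Require Import classical_sets reals boolp.
From mathcomp Require Import ring lra zify.
Import Order.TTheory GRing.Theory Num.Theory.
Local Open Scope ring_scope.
Local Open Scope classical_set_scope.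

(* Since |d(x,c) - d(y,c)| <= d(x,y), we have d_C <= d, which gives one
   direction. Conversely, fix x in X and c0 in C, and let V be the span of
   C - c0, which has a finite basis drawn from C - c0. If d_C(x,y) is small,
   then |y - c|^2 - |x - c|^2 is small for every c in C; on the basis this
   makes the component z of u = y - x along V small, and w = u - z is
   orthogonal to V. Reflecting y in the hyperplane through c0 orthogonal to w
   keeps all distances to C, and brings y back close to x. So if y stayed far
   from x, this reflection would be a second point of X with the same
   C-coordinates as y, contradicting that C resolves X. *)

Section EuclideanSpace.
Context {R : rcfType} {n : nat}.
Implicit Types (a b c u v x y : 'rV[R]_n) (t : R).

Definition vdot a b : R := \sum_i a ord0 i * b ord0 i.
Definition vnorm a : R := Num.sqrt (vdot a a).

Lemma vdotC a b : vdot a b = vdot b a.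
Proof. by apply: eq_bigr => i _; rewrite mulrC. Qed.

Lemma vdotDl a b c : vdot (a + b) c = vdot a c + vdot b c.
Proof. by rewrite /vdot -big_split; apply: eq_bigr => i _; rewrite !mxE mulrDl. Qed.

Lemma vdotZl t a c : vdot (t *: a) c = t * vdot a c.
Proof. by rewrite /vdot mulr_sumr; apply: eq_bigr => i _; rewrite !mxE mulrA. Qed.

Lemma vdotNl a c : vdot (- a) c = - vdot a c.
Proof. by rewrite -scaleN1r vdotZl mulN1r. Qed.

Lemma vdotBl a b c : vdot (a - b) c = vdot a c - vdot b c.
Proof. by rewrite vdotDl vdotNl. Qed.

Lemma vdotDr a b c : vdot c (a + b) = vdot c a + vdot c b.
Proof. by rewrite vdotC vdotDl !(vdotC c). Qed.

Lemma vdotZr t a c : vdot c (t *: a) = t * vdot c a.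
Proof. by rewrite vdotC vdotZl vdotC. Qed.

Lemma vdotBr a b c : vdot c (a - b) = vdot c a - vdot c b.
Proof. by rewrite vdotC vdotBl !(vdotC c). Qed.

Lemma vdot0r a : vdot a 0 = 0.
Proof. by rewrite -(scale0r 0) vdotZr mul0r. Qed.

Lemma vdotvv_ge0 a : 0 <= vdot a a.
Proof. by apply: sumr_ge0 => i _; rewrite -expr2 sqr_ge0. Qed.

Lemma vdotvv_eq0 a : (vdot a a == 0) = (a == 0).
Proof.
apply/idP/eqP => [|->]; last by rewrite vdot0r.
rewrite psumr_eq0 => [/allP a0|i _]; last by rewrite -expr2 sqr_ge0.
apply/rowP => i; rewrite mxE; apply/eqP.
by rewrite -sqrf_eq0 expr2; exact: a0 (mem_index_enum i).
Qed.

Lemma vnorm_ge0 a : 0 <= vnorm a.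
Proof. exact: sqrtr_ge0. Qed.

Lemma vnorm_sqr a : vnorm a ^+ 2 = vdot a a.
Proof. by rewrite sqr_sqrtr // vdotvv_ge0. Qed.

Lemma vnormZ t a : vnorm (t *: a) = `|t| * vnorm a.
Proof. by rewrite /vnorm vdotZl vdotZr mulrA -expr2 sqrtrM ?sqr_ge0 // sqrtr_sqr. Qed.

Lemma vnormN a : vnorm (- a) = vnorm a.
Proof. by rewrite -scaleN1r vnormZ normrN normr1 mul1r. Qed.

Lemma normr_vdot_le a b : `|vdot a b| <= vnorm a * vnorm b.
Proof.
rewrite -[`|vdot a b|]sqrtr_sqr /vnorm -sqrtrM ?vdotvv_ge0 // ler_sqrt;
  last by rewrite mulr_ge0 ?vdotvv_ge0.
have [->|b0] := eqVneq b 0; first by rewrite !vdot0r expr0n mulr0.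
have bb_gt0 : 0 < vdot b b by rewrite lt_def vdotvv_eq0 b0 vdotvv_ge0.
have := vdotvv_ge0 (a - (vdot a b / vdot b b) *: b).
rewrite !vdotBl !vdotBr !vdotZl !vdotZr (vdotC b a) => ge0.
suff : 0 <= (vdot a a * vdot b b - vdot a b ^+ 2) / vdot b b.
  by rewrite pmulr_lge0 ?invr_gt0 // subr_ge0.
by move: ge0; congr (_ <= _); field; rewrite gt_eqF.
Qed.

Lemma vnormD_le a b : vnorm (a + b) <= vnorm a + vnorm b.
Proof.
have := normr_vdot_le a b; rewrite ler_norml => /andP[_ ab_le].
have sqrD : vnorm (a + b) ^+ 2 = vnorm a ^+ 2 + 2 * vdot a b + vnorm b ^+ 2.
  by rewrite !vnorm_sqr vdotDl !vdotDr (vdotC b a); ring.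
have := vnorm_ge0 a; have := vnorm_ge0 b; have := vnorm_ge0 (a + b); nra.
Qed.

Lemma vnorm_le_l1 a : vnorm a <= \sum_i `|a ord0 i|.
Proof.
have l1_ge0 : 0 <= \sum_i `|a ord0 i| by apply: sumr_ge0.
rewrite -[X in _ <= X]ger0_norm // -sqrtr_sqr ler_sqrt ?sqr_ge0 //.
rewrite expr2 mulr_suml; apply: ler_sum => i _.
rewrite -expr2 -real_normK ?num_real // expr2 ler_wpM2l //.
by rewrite (bigD1 i) //= lerDl sumr_ge0.
Qed.

Lemma vdotE u v : vdot u v = (u *m v^T) ord0 ord0.
Proof. by rewrite mxE; apply: eq_bigr => i _; rewrite mxE. Qed.

Lemma vdot_sqr_change x y c :
  vdot (y - c) (y - c) - vdot (x - c) (x - c) =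
  2 * vdot (y - x) (x - c) + vdot (y - x) (y - x).
Proof.
have -> : y - c = (y - x) + (x - c) by rewrite addrA subrK.
move: (y - x) (x - c) => u a.
by rewrite !vdotDl !vdotDr (vdotC a u); ring.
Qed.

End EuclideanSpace.

Section EuclideanDistance.
Context {R : realType} {n : nat}.
Implicit Types (x y z c : 'rV[R]_n) (C : set 'rV[R]_n).

Local Notation d := (@euclid_dist R n).

Lemma euclid_distE x y : d x y = vnorm (x - y).
Proof.
by rewrite /euclid_dist /vnorm; congr Num.sqrt; apply: eq_bigr => i _; rewrite !mxE.
Qed.

Lemma euclid_dist_ge0 x y : 0 <= d x y.
Proof. by rewrite euclid_distE vnorm_ge0. Qed.

Lemma euclid_distC x y : d x y = d y x.
Proof. by rewrite !euclid_distE -vnormN opprB. Qed.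

Lemma euclid_dist_triangle x y z : d x z <= d x y + d y z.
Proof.
rewrite !euclid_distE (_ : x - z = (x - y) + (y - z)) ?vnormD_le //.
by rewrite addrA subrK.
Qed.

Lemma euclid_dist_xx x : d x x = 0.
Proof. by rewrite euclid_distE subrr /vnorm vdot0r sqrtr0. Qed.

Lemma ler_dist_euclid x y c : `|d x c - d y c| <= d x y.
Proof.
have := euclid_dist_triangle x y c; have := euclid_dist_triangle y x c.
by rewrite (euclid_distC y x) ler_norml => *; apply/andP; split; lra.
Qed.

Lemma dC_le_euclid C x y : dC d C x y <= d x y.
Proof.
have [ne|C0] := pselect ([set `|d x c - d y c| | c in C] !=set0).
  by apply: ge_sup => // _ [c _ <-]; apply: ler_dist_euclid.
rewrite /dC (_ : [set _ | c in C] = set0) ?sup0 ?euclid_dist_ge0 //.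
by apply/seteqP; split => // t Ct; apply: C0; exists t.
Qed.

Lemma ler_dist_dC C x y c : C c -> `|d x c - d y c| <= dC d C x y.
Proof.
move=> Cc; apply: ub_le_sup; last by exists c.
by exists (d x y) => _ [c' _ <-]; apply: ler_dist_euclid.
Qed.

End EuclideanDistance.

Lemma normr_sqrB_le {R : realFieldType} (a b del : R) :
  0 <= a -> 0 <= b -> `|a - b| <= del -> del <= 1 ->
  `|b ^+ 2 - a ^+ 2| <= del * (2 * a + 1).
Proof. by move=> a0 b0; rewrite !ler_norml => /andP[] *; apply/andP; split; nra. Qed.

Section DistanceIncrements.
Context {R : realType} {n : nat}.
Implicit Types (x y c : 'rV[R]_n) (del : R).

Local Notation d := (@euclid_dist R n).

Lemma sqr_increment_le x y c del :
  `|d x c - d y c| <= del -> del <= 1 ->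
  `|2 * vdot (y - x) (x - c) + vdot (y - x) (y - x)| <= del * (2 * vnorm (x - c) + 1).
Proof.
rewrite -vdot_sqr_change -!vnorm_sqr !euclid_distE => le_del del_le1.
by apply: normr_sqrB_le; rewrite ?vnorm_ge0.
Qed.

Lemma vdot_increment_le x y c c0 del :
  `|d x c - d y c| <= del -> `|d x c0 - d y c0| <= del -> del <= 1 ->
  `|vdot (y - x) (c - c0)| <= del * (2 * vnorm (x - c0) + vnorm (c - c0) + 1).
Proof.
move=> le_c le_c0 del_le1; have del_ge0 := le_trans (normr_ge0 _) le_c.
move: (sqr_increment_le _ _ _ _ le_c del_le1) (sqr_increment_le _ _ _ _ le_c0 del_le1).
set u := y - x.
have -> : vdot u (c - c0) = vdot u (x - c0) - vdot u (x - c).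
  by rewrite -vdotBr opprB [x - c0 + _]addrC addrA subrK.
have tri : vnorm (x - c) <= vnorm (x - c0) + vnorm (c - c0).
  rewrite -(vnormN (c - c0)) opprB.
  by rewrite (_ : x - c = (x - c0) + (c0 - c)) ?vnormD_le // addrA subrK.
have := vnorm_ge0 (x - c0).
rewrite !ler_norml => ? /andP[? ?] /andP[? ?]; apply/andP; split; nra.
Qed.

End DistanceIncrements.

Lemma exists_spanning_rows {F : fieldType} {n : nat} (P : set 'rV[F]_n) :
  exists k (B : 'M[F]_(k, n)), (forall j, P (row j B)) /\ (forall v, P v -> (v <= B)%MS).
Proof.
suff grow m k (B : 'M[F]_(k, n)) : (forall j, P (row j B)) -> (n - \rank B <= m)%N ->
    exists k (B : 'M[F]_(k, n)), (forall j, P (row j B)) /\ (forall v, P v -> (v <= B)%MS).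
  by apply: (grow n 0%N 0) => //; [case | rewrite leq_subr].
elim: m k B => [|m IHm] k B PB rkB.
  exists k, B; split => // v _; apply: submx_full.
  by rewrite /row_full eqn_leq rank_leq_col; lia.
have [spanB|] := pselect (forall v, P v -> (v <= B)%MS); first by exists k, B.
move=> /existsNP[v /not_implyP[Pv vB]].
apply: (IHm _ (col_mx B v)).
  move=> j; case: (split_ordP j) => j' ->; first by rewrite rowKu.
  by rewrite rowKd (_ : row j' v = v) //; apply/rowP => i; rewrite mxE ord1.
have : (\rank B < \rank (col_mx B v))%N.
  rewrite -(addsmxE B v).1 ltn_neqAle.
  have [-> ->] := mxrank_leqif_sup (addsmxSl B v); rewrite andbT.
  by apply: contra_notN vB => /(submx_trans (addsmxSr B v)).
by have := rank_leq_col (col_mx B v); lia.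
Qed.

Section KernelShift.
Context {R : rcfType} {n : nat}.

Lemma vdot_submx_eq0 k (B : 'M[R]_(k, n)) w v :
  w *m B^T = 0 -> (v <= B)%MS -> vdot w v = 0.
Proof. by move=> wB /submxP[D ->]; rewrite vdotE trmx_mul mulmxA wB mul0mx mxE. Qed.

Lemma small_shift_into_kernel k (B : 'M[R]_(k, n)) :
  exists2 K, 0 <= K & forall u eps, (forall j, `|vdot u (row j B)| <= eps) ->
    exists2 z, vnorm z <= eps * K & (u - z) *m B^T = 0.
Proof.
pose P := pinvmx B^T; exists (\sum_i \sum_j `|P j i|) => [|u eps le_eps].
  by apply: sumr_ge0 => i _; apply: sumr_ge0.
have sE j : (u *m B^T) ord0 j = vdot u (row j B).
  by rewrite vdotE !mxE; apply: eq_bigr => i _; rewrite !mxE.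
exists (u *m B^T *m P); last by rewrite mulmxBl mulmxKpV ?subrr ?submxMl.
apply: le_trans (vnorm_le_l1 _) _; rewrite mulr_sumr; apply: ler_sum => i _.
rewrite mxE mulr_sumr; apply: le_trans (ler_norm_sum _ _ _) _.
by apply: ler_sum => j _; rewrite normrM sE ler_wpM2r.
Qed.

End KernelShift.

Section HyperplaneReflection.
Context {R : rcfType} {n : nat}.
Implicit Types (w p y c : 'rV[R]_n).

(* The reflection of [y] in the hyperplane through [p] orthogonal to [w];
   the identity when [w = 0], since then the division returns [0]. *)
Definition hreflect w p y : 'rV[R]_n := y - (2 * vdot w (y - p) / vdot w w) *: w.

Lemma hreflect_dot_mul w p y :
  (2 * vdot w (y - p) / vdot w w) * vdot w w = 2 * vdot w (y - p).
Proof.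
have [->|w0] := eqVneq w 0; first by rewrite (vdotC 0) vdot0r !(mulr0, mul0r).
by rewrite divfK // vdotvv_eq0.
Qed.

Lemma vnorm_hreflectB w p y c :
  vdot w (c - p) = 0 -> vnorm (hreflect w p y - c) = vnorm (y - c).
Proof.
move=> wc; rewrite /vnorm; congr Num.sqrt; rewrite /hreflect addrAC.
have wy : vdot w (y - c) = vdot w (y - p).
  have -> : y - c = (y - p) - (c - p) by rewrite opprB addrA subrK.
  by rewrite vdotBr wc subr0.
have := hreflect_dot_mul w p y; set lam := _ / _ => lamE.
move: (y - c) wy => a wy.
by rewrite !vdotBl !vdotBr !vdotZl !vdotZr (vdotC a w) wy lamE; ring.
Qed.

Lemma vnorm_hreflect_shift w p y :
  vnorm (hreflect w p y - (y - w)) * vnorm w = `|vdot w w - 2 * vdot w (y - p)|.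
Proof.
have := hreflect_dot_mul w p y; set lam := _ / _ => lamE.
have -> : hreflect w p y - (y - w) = (1 - lam) *: w.
  by apply/rowP => i; rewrite !mxE -/lam; ring.
rewrite vnormZ -mulrA -expr2 vnorm_sqr -[vdot w w in LHS]ger0_norm ?vdotvv_ge0 //.
by rewrite -normrM mulrBl mul1r lamE.
Qed.

End HyperplaneReflection.

Section ReflectionDefect.
Context {R : realType} {n : nat}.
Local Notation d := (@euclid_dist R n).

(* If [y = x + z + w] with [z] small and [|y - c0| = |x - c0| + O(del)], then
   reflecting [y] along [w] through [c0] lands near [y - w = x + z]. *)
Lemma reflection_defect_le (x y z c0 : 'rV[R]_n) (del M : R) :
  `|d x c0 - d y c0| <= del -> del <= 1 -> vnorm z <= del * M ->
  `|vdot (y - x - z) (y - x - z) - 2 * vdot (y - x - z) (y - c0)| <=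
    del * (2 * vnorm (x - c0) + 1 + M ^+ 2 + 2 * M * vnorm (x - c0)).
Proof.
move=> near del_le1 z_small; have del_ge0 := le_trans (normr_ge0 _) near.
set u := y - x; set w := u - z; set K0 := vnorm (x - c0).
have -> : vdot w w - 2 * vdot w (y - c0) =
    vdot z z + 2 * vdot z (x - c0) - (2 * vdot u (x - c0) + vdot u u).
  have -> : y - c0 = u + (x - c0) by rewrite addrA subrK.
  rewrite /w -/u; move: (x - c0) => a; clearbody u.
  by rewrite !vdotBl !vdotBr !vdotDr (vdotC z u); ring.
have zz : vnorm z ^+ 2 <= del * M ^+ 2.
  apply: le_trans (_ : (del * M) ^+ 2 <= _).
    by rewrite lerXn2r ?nnegrE ?vnorm_ge0 ?(le_trans (vnorm_ge0 z)).
  by rewrite exprMn ler_wpM2r ?sqr_ge0 // expr2; nra.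
have zK : vnorm z * K0 <= del * M * K0 by rewrite ler_wpM2r ?vnorm_ge0.
have := sqr_increment_le _ _ _ _ near del_le1; rewrite -/u -/K0.
have := normr_vdot_le z (x - c0); rewrite -/K0 -(vnorm_sqr z).
have := sqr_ge0 (vnorm z).
rewrite !ler_norml => ? /andP[? ?] /andP[? ?]; apply/andP; split; lra.
Qed.

End ReflectionDefect.

Section MirrorPoint.
Context {R : realType} {n : nat}.
Local Notation d := (@euclid_dist R n).
Context {C : set 'rV[R]_n} (x : 'rV[R]_n) {c0 : 'rV[R]_n} {k : nat} {B : 'M[R]_(k, n)}.
Hypotheses (Cc0 : C c0) (rowsB : forall j, exists2 c, C c & row j B = c - c0)
  (spanB : forall c, C c -> (c - c0 <= B)%MS).

Lemma exists_orthogonal_shift :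
  exists2 M, 0 <= M & forall del y, del <= 1 ->
    (forall c, C c -> `|d x c - d y c| <= del) ->
    exists2 z, vnorm z <= del * M & forall c, C c -> vdot (y - x - z) (c - c0) = 0.
Proof.
have [K K_ge0 shiftK] := small_shift_into_kernel _ B.
pose L := 2 * vnorm (x - c0) + 1 + \sum_j vnorm (row j B).
have L_ge0 : 0 <= L.
  by rewrite !addr_ge0 ?mulr_ge0 ?vnorm_ge0 ?sumr_ge0 // => j _; apply: vnorm_ge0.
exists (L * K) => [|del y del_le1 near]; first exact: mulr_ge0.
have del_ge0 := le_trans (normr_ge0 _) (near c0 Cc0).
have [j|z z_small zB] := shiftK (y - x) (del * L).
  have [c Cc rowE] := rowsB j.
  have : vnorm (row j B) <= \sum_j vnorm (row j B).
    by rewrite (bigD1 j) //= lerDl sumr_ge0 // => *; apply: vnorm_ge0.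
  rewrite rowE => le_sum.
  apply: le_trans (vdot_increment_le _ _ _ _ _ (near c Cc) (near c0 Cc0) del_le1) _.
  by rewrite ler_wpM2l // /L -addrA (addrC (vnorm _)) addrA lerD2l.
exists z => [|c Cc]; first by rewrite mulrA.
by apply: (vdot_submx_eq0 _ B) => //; exact: spanB.
Qed.

Lemma exists_mirror_point e : 0 < e ->
  exists2 K, 0 < K & forall del y, del <= 1 -> del * K <= e ->
    (forall c, C c -> `|d x c - d y c| <= del) -> e <= d x y ->
    exists2 q, d x q <= del * K & forall c, C c -> d q c = d y c.
Proof.
move=> e_gt0; have [M M_ge0 decomp] := exists_orthogonal_shift.
set K0 := vnorm (x - c0); have K0_ge0 : 0 <= K0 := vnorm_ge0 _.
pose N := 2 * K0 + 1 + M ^+ 2 + 2 * M * K0.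
have N_ge0 : 0 <= N by rewrite !addr_ge0 ?mulr_ge0 ?sqr_ge0.
have NE_ge0 : 0 <= 2 * N / e by rewrite divr_ge0 ?mulr_ge0 // ltW.
exists (2 * M + 2 * N / e + 1) => [|del y del_le1 delK near far].
  by rewrite ltr_wpDl // addr_ge0 // mulr_ge0.
have del_ge0 := le_trans (normr_ge0 _) (near c0 Cc0).
have [z z_small orth] := decomp del y del_le1 near.
set u := y - x; set w := u - z; set q := hreflect w c0 y.
exists q; last first.
  by move=> c Cc; rewrite !euclid_distE vnorm_hreflectB // orth.
have delM : del * M <= e / 2 by nra.
have w_big : e / 2 <= vnorm w.
  have : vnorm u <= vnorm w + vnorm z by rewrite -{1}(subrK z u) vnormD_le.
  by move: far; rewrite euclid_distC euclid_distE; lra.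
have defect := reflection_defect_le _ _ _ _ _ _ (near c0 Cc0) del_le1 z_small.
have shift_small : vnorm (q - (y - w)) <= del * (2 * N / e).
  have shift_e : vnorm (q - (y - w)) * (e / 2) <= del * N.
    rewrite (le_trans _ defect) // -vnorm_hreflect_shift.
    by rewrite ler_wpM2l ?vnorm_ge0.
  rewrite (_ : del * (2 * N / e) = del * N / (e / 2)); last by field; rewrite gt_eqF.
  by rewrite ler_pdivlMr // divr_gt0.
rewrite euclid_distC euclid_distE (_ : q - x = z + (q - (y - w))).
  apply: le_trans (vnormD_le _ _) _; nra.
by rewrite /w /u; apply/rowP => i; rewrite !mxE; ring.
Qed.

End MirrorPoint.

Section IdentityContinuity.
Context {R : realType} {n : nat}.
Local Notation d := (@euclid_dist R n).
Variables (X C : set 'rV[R]_n).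

Lemma id_continuous_euclid_dC : id_continuous_on X d (dC d C).
Proof.
by move=> x _ e e_gt0; exists e => // y _; apply: le_lt_trans (dC_le_euclid _ _ _).
Qed.

Hypothesis resolving : forall x y, X x -> X y -> x <> y ->
  exists2 c, C c & d x c <> d y c.
Hypothesis X_open : euclid_open X.

Lemma id_continuous_dC_euclid : id_continuous_on X (dC d C) d.
Proof.
move=> x Xx e e_gt0; have [r r_gt0 ballX] := X_open x Xx.
have [[c0 Cc0]|C0] := pselect (exists c, C c); last first.
  exists 1 => // y Xy _; have [<-|/eqP xy] := eqVneq x y; first by rewrite euclid_dist_xx.
  by have [c Cc _] := resolving x y Xx Xy xy; case: C0; exists c.
have [k [B [rowsB spanB]]] := exists_spanning_rows [set v | exists2 c, C c & v = c - c0].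
have spanC c : C c -> (c - c0 <= B)%MS by move=> Cc; apply: spanB; exists c.
have [K K_gt0 mirror] := exists_mirror_point x Cc0 rowsB spanC _ e_gt0.
have er_gt0 : 0 < Num.min e r by rewrite lt_min e_gt0.
pose del := Num.min 1 (Num.min e r / (2 * K)).
have del_le1 : del <= 1 by rewrite ge_min lexx.
have delK : del * K < Num.min e r.
  have : del * (2 * K) <= Num.min e r.
    by rewrite -ler_pdivlMr ?mulr_gt0 // ge_min lexx orbT.
  lra.
exists del => [|y Xy dCxy]; first by rewrite lt_min ltr01 divr_gt0 ?mulr_gt0.
rewrite ltNge; apply/negP => far.
have near c : C c -> `|d x c - d y c| <= del.
  by move=> Cc; exact: ltW (le_lt_trans (ler_dist_dC _ _ _ _ Cc) dCxy).
have [|q xq qy] := mirror del y del_le1 _ near far.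
  by apply: ltW (lt_le_trans delK _); rewrite ge_min lexx.
have /andP[xq_e xq_r] : (d x q < e) && (d x q < r).
  by rewrite -lt_min; exact: le_lt_trans xq delK.
have q_ne_y : q <> y by move=> qy'; move: xq_e; rewrite qy' ltNge far.
have [c Cc] := resolving q y (ballX q xq_r) Xy q_ne_y.
by rewrite qy.
Qed.

End IdentityContinuity.

Theorem proposition7p3 (R : realType) (n : nat) (M X C : set 'rV[R]_n) :
  metric_coord_system (@euclid_dist R n) M X C ->
  euclid_open X ->
  id_homeomorphism X (@euclid_dist R n) (dC (@euclid_dist R n) C).
Proof.
move=> [_ _ resolving] X_open; split; first exact: id_continuous_euclid_dC.
exact: id_continuous_dC_euclid.
Qed.
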